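(* Let $T\in B(H)$ with $W_{\rm e}(T)\supset\overline{\mathbb D}$. Then there exist mutually orthogonal closed subspaces $H_k\subset H$, $k\in\mathbb N$, such that $W_{\rm e}(P_{H_k}T|_{H_k})\supset\overline{\mathbb D}$ for every $k\in\mathbb N$.
   Context: $H$ is an infinite-dimensional complex separable Hilbert space; $\mathbb D$ is the open unit disc. For an operator $A$ on a Hilbert space, $W_{\rm e}(A)$ is the set of $\lambda\in\mathbb C$ with $\langle Ax_k,x_k\rangle\to\lambda$ for some orthonormal sequence $(x_k)$. $P_{H_k}$ is the orthogonal projection onto $H_k$ and $P_{H_k}T|_{H_k}\in B(H_k)$ is the compression. *)

From Stdlib Require Import Reals.
Open Scope R_scope.

Definition C := (R * R)%type.
Definition C0 : C := (0, 0).
Definition C1 : C := (1, 0).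
Definition Cadd (a b : C) : C := (fst a + fst b, snd a + snd b).
Definition Cmul (a b : C) : C :=
  (fst a * fst b - snd a * snd b, fst a * snd b + snd a * fst b).
Definition Cconj (a : C) : C := (fst a, - snd a).
Definition Cmod (a : C) : R := sqrt (fst a * fst a + snd a * snd a).
Definition Csub (a b : C) : C := (fst a - fst b, snd a - snd b).

Definition Ccv (u : nat -> C) (l : C) : Prop :=
  forall eps, eps > 0 -> exists N, forall n, (n >= N)%nat -> Cmod (Csub (u n) l) < eps.

Definition in_closed_disc (z : C) : Prop := Cmod z <= 1.

(* An infinite-dimensional complex separable Hilbert space
   (inner product linear in the first variable). *)
Record CHilbert := {
  hs :> Type;
  hzero : hs;
  hadd : hs -> hs -> hs;
  hopp : hs -> hs;
  hscal : C -> hs -> hs;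
  inner : hs -> hs -> C;
  hadd_assoc : forall x y z, hadd x (hadd y z) = hadd (hadd x y) z;
  hadd_comm : forall x y, hadd x y = hadd y x;
  hadd_zero : forall x, hadd x hzero = x;
  hadd_opp : forall x, hadd x (hopp x) = hzero;
  hscal_one : forall x, hscal C1 x = x;
  hscal_assoc : forall a b x, hscal a (hscal b x) = hscal (Cmul a b) x;
  hscal_distr_v : forall a x y, hscal a (hadd x y) = hadd (hscal a x) (hscal a y);
  hscal_distr_s : forall a b x, hscal (Cadd a b) x = hadd (hscal a x) (hscal b x);
  inner_add_l : forall x y z, inner (hadd x y) z = Cadd (inner x z) (inner y z);
  inner_scal_l : forall a x y, inner (hscal a x) y = Cmul a (inner x y);
  inner_conj_sym : forall x y, inner y x = Cconj (inner x y);
  inner_pos : forall x, 0 <= fst (inner x x);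
  inner_definite : forall x, fst (inner x x) = 0 -> x = hzero;
  hcomplete : forall u : nat -> hs,
    (forall eps, eps > 0 -> exists N, forall n m, (n >= N)%nat -> (m >= N)%nat ->
       sqrt (fst (inner (hadd (u n) (hopp (u m))) (hadd (u n) (hopp (u m))))) < eps) ->
    exists l, forall eps, eps > 0 -> exists N, forall n, (n >= N)%nat ->
       sqrt (fst (inner (hadd (u n) (hopp l)) (hadd (u n) (hopp l)))) < eps;
  hseparable : exists d : nat -> hs, forall x eps, eps > 0 -> exists n,
       sqrt (fst (inner (hadd x (hopp (d n))) (hadd x (hopp (d n))))) < eps;
  hinfinite : exists e : nat -> hs, forall i j,
       inner (e i) (e j) = if Nat.eqb i j then C1 else C0
}.

Arguments hzero {_}.
Arguments hadd {_} _ _.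
Arguments hopp {_} _.
Arguments hscal {_} _ _.
Arguments inner {_} _ _.

Section Ops.
Context {H : CHilbert}.

Definition hsub (x y : H) : H := hadd x (hopp y).
Definition hnorm (x : H) : R := sqrt (fst (inner x x)).

Definition hcv (u : nat -> H) (l : H) : Prop :=
  forall eps, eps > 0 -> exists N, forall n, (n >= N)%nat -> hnorm (hsub (u n) l) < eps.

Definition bounded_operator (T : H -> H) : Prop :=
  (forall x y, T (hadd x y) = hadd (T x) (T y)) /\
  (forall a x, T (hscal a x) = hscal a (T x)) /\
  (exists M, forall x, hnorm (T x) <= M * hnorm x).

Definition closed_subspace (S : H -> Prop) : Prop :=
  S hzero /\
  (forall x y, S x -> S y -> S (hadd x y)) /\
  (forall a x, S x -> S (hscal a x)) /\
  (forall u l, (forall n, S (u n)) -> hcv u l -> S l).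

Definition orthonormal_seq (x : nat -> H) : Prop :=
  forall i j, inner (x i) (x j) = if Nat.eqb i j then C1 else C0.

Definition is_orth_proj (S : H -> Prop) (x y : H) : Prop :=
  S y /\ forall z, S z -> inner (hsub x y) z = C0.

Definition ess_num_range (T : H -> H) (lam : C) : Prop :=
  exists x : nat -> H, orthonormal_seq x /\ Ccv (fun k => inner (T (x k)) (x k)) lam.

(* essential numerical range of the compression P_S T |_S, an operator on
   the Hilbert space S (with the inner product inherited from H):
   lam such that <P_S T x_k, x_k> -> lam for some orthonormal sequence (x_k) in S. *)
Definition ess_num_range_compression (S : H -> Prop) (T : H -> H) (lam : C) : Prop :=
  exists x : nat -> H, (forall k, S (x k)) /\ orthonormal_seq x /\
    exists y : nat -> H, (forall k, is_orth_proj S (T (x k)) (y k)) /\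
      Ccv (fun k => inner (y k) (x k)) lam.

End Ops.

From Pilot Require Import Defs.
From Stdlib Require Import Reals.
Open Scope R_scope.
From Stdlib Require Import Lra Lia ZArith ClassicalEpsilon Cantor.

(** Every point of the closed disc lies in [W_e(T)], and this survives passing to the
    orthogonal complement of finitely many vectors: if [<T x_k, x_k> -> lam] along an
    orthonormal sequence, Bessel's inequality forces the component of [x_k] in a fixed finite
    span to vanish, so removing it and renormalising changes [<T x_k, x_k>] arbitrarily little.
    Choosing vectors one at a time thus gives an orthonormal sequence [(e_n)] in which [n]
    codes a triple [(k, j, c)] and [<T e_n, e_n>] lies within [1/(j+1)] of the point [c] of a
    grid of mesh [1/(j+1)] in the disc. [H_k] is the closed span of the [e_n] with first
    code [k]: given [lam] in the disc, picking at each level [j] a grid point near [lam]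
    yields an orthonormal sequence [x_j] in [H_k] with [<P T x_j, x_j> = <T x_j, x_j> -> lam]. *)

(* [Reals] also exports a [C] (binomial coefficients) and a [C1]. *)
Notation C := Pilot.Defs.C.
Notation C1 := Pilot.Defs.C1.

Arguments hadd_assoc {_} _ _ _.
Arguments hadd_comm {_} _ _.
Arguments hadd_zero {_} _.
Arguments hadd_opp {_} _.
Arguments hscal_one {_} _.
Arguments hscal_distr_s {_} _ _ _.
Arguments inner_add_l {_} _ _ _.
Arguments inner_scal_l {_} _ _ _.
Arguments inner_conj_sym {_} _ _.
Arguments inner_pos {_} _.
Arguments inner_definite {_} _ _.

(** * Complex numbers *)

Lemma Ceq (a b : C) : fst a = fst b -> snd a = snd b -> a = b.
Proof. destruct a, b; simpl; intros; subst; reflexivity. Qed.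

Definition Cm1 : C := (-1, 0).

Ltac Cring := apply Ceq; unfold Cadd, Csub, Cmul, Cconj, C0, C1, Cm1; simpl; ring.

(* The l1 norm [|Re z| + |Im z|], equivalent to [Cmod] and easier to estimate. *)
Definition Cabs1 (z : C) : R := Rabs (fst z) + Rabs (snd z).

Lemma Cabs1_add (a b : C) : Cabs1 (Cadd a b) <= Cabs1 a + Cabs1 b.
Proof.
  unfold Cabs1, Cadd; simpl.
  pose proof (Rabs_triang (fst a) (fst b)); pose proof (Rabs_triang (snd a) (snd b)); lra.
Qed.

Lemma Cabs1_sub_triangle (a b m : C) :
  Cabs1 (Csub a b) <= Cabs1 (Csub a m) + Cabs1 (Csub m b).
Proof.
  replace (Csub a b) with (Cadd (Csub a m) (Csub m b)) by Cring. apply Cabs1_add.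
Qed.

Lemma Cmod_le_Cabs1 (z : C) : Cmod z <= Cabs1 z.
Proof.
  unfold Cmod, Cabs1. pose proof (Rabs_pos (fst z)); pose proof (Rabs_pos (snd z)).
  rewrite <- (sqrt_Rsqr (Rabs (fst z) + Rabs (snd z))) by lra. apply sqrt_le_1_alt.
  pose proof (Rsqr_abs (fst z)); pose proof (Rsqr_abs (snd z)). unfold Rsqr in *. nra.
Qed.

Lemma Cabs1_le_Cmod (z : C) : Cabs1 z <= 2 * Cmod z.
Proof.
  unfold Cmod, Cabs1. pose proof (Rabs_pos (fst z)); pose proof (Rabs_pos (snd z)).
  assert (Hs : 0 <= fst z * fst z + snd z * snd z) by nra.
  rewrite <- (sqrt_Rsqr (Rabs (fst z) + Rabs (snd z))) by lra.
  rewrite <- (sqrt_Rsqr 2), <- sqrt_mult by (unfold Rsqr; nra). apply sqrt_le_1_alt.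
  pose proof (Rsqr_abs (fst z)); pose proof (Rsqr_abs (snd z)). unfold Rsqr in *. nra.
Qed.

Lemma Cabs1_eq0 (z : C) : (forall eps, eps > 0 -> Cabs1 z < eps) -> z = C0.
Proof.
  intro Hs. destruct z as [a b]. unfold Cabs1 in Hs; simpl in Hs.
  assert (Rabs a + Rabs b <= 0) by (apply Rnot_lt_le; intro L; specialize (Hs _ L); lra).
  pose proof (Rabs_pos a); pose proof (Rabs_pos b).
  pose proof (Rle_abs a); pose proof (Rle_abs (- a)).
  pose proof (Rle_abs b); pose proof (Rle_abs (- b)).
  rewrite !Rabs_Ropp in *. apply Ceq; simpl; lra.
Qed.

Lemma Ccv_of_Cabs1_bound (u : nat -> C) (l : C) (B : R) :
  (forall j, Cabs1 (Csub (u j) l) <= B / (INR j + 1)) -> Ccv u l.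
Proof.
  intros Hu eps ep.
  destruct (INR_unbounded (B / eps)) as [N HN].
  exists N. intros j Hj. apply le_INR in Hj.
  assert (Hpos : INR j + 1 > 0) by (pose proof (pos_INR j); lra).
  eapply Rle_lt_trans; [apply Cmod_le_Cabs1|]. eapply Rle_lt_trans; [apply Hu|].
  assert (HB : B < eps * (INR j + 1)).
  { replace B with (B / eps * eps) by (field; lra). nra. }
  apply (Rmult_lt_reg_r (INR j + 1)); [lra|].
  unfold Rdiv; rewrite Rmult_assoc, Rinv_l by lra; lra.
Qed.

(** * Inner product spaces *)

Section Algebra.
Context {H : CHilbert}.

Lemma hadd_zero_l (x : H) : hadd hzero x = x.
Proof. rewrite hadd_comm; apply hadd_zero. Qed.

Lemma hadd_cancel_r (a b : H) : hadd a b = a -> b = hzero.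
Proof.
  intro E.
  assert (E2 : hadd (hopp a) (hadd a b) = hadd (hopp a) a) by (rewrite E; reflexivity).
  rewrite hadd_assoc, (hadd_comm (hopp a) a), hadd_opp, hadd_zero_l in E2. exact E2.
Qed.

Lemma hscal_C0 (x : H) : hscal C0 x = hzero.
Proof.
  apply (hadd_cancel_r (hscal C0 x)).
  rewrite <- hscal_distr_s. f_equal. Cring.
Qed.

Lemma hopp_unique (x y : H) : hadd x y = hzero -> y = hopp x.
Proof.
  intro E.
  assert (E2 : hadd (hopp x) (hadd x y) = hadd (hopp x) hzero) by (rewrite E; reflexivity).
  rewrite hadd_assoc, (hadd_comm (hopp x) x), hadd_opp, hadd_zero_l, hadd_zero in E2.
  exact E2.
Qed.

Lemma hopp_scal (x : H) : hopp x = hscal Cm1 x.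
Proof.
  symmetry; apply hopp_unique.
  rewrite <- (hscal_one x) at 1. rewrite <- hscal_distr_s.
  replace (Cadd C1 Cm1) with C0 by Cring. apply hscal_C0.
Qed.

Lemma hsub_add_cancel (a b : H) : hadd (hsub a b) b = a.
Proof.
  unfold hsub. rewrite <- hadd_assoc, (hadd_comm (hopp b) b), hadd_opp, hadd_zero.
  reflexivity.
Qed.

Lemma inner_zero_l (y : H) : inner hzero y = C0.
Proof. rewrite <- (hscal_C0 hzero), inner_scal_l. Cring. Qed.

Lemma inner_zero_r (y : H) : inner y hzero = C0.
Proof. rewrite inner_conj_sym, inner_zero_l. Cring. Qed.

Lemma inner_eq0_sym (x y : H) : inner x y = C0 -> inner y x = C0.
Proof. intro E. rewrite inner_conj_sym, E. Cring. Qed.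

Lemma inner_add_r (x y z : H) : inner x (hadd y z) = Cadd (inner x y) (inner x z).
Proof.
  rewrite inner_conj_sym, inner_add_l, (inner_conj_sym y x), (inner_conj_sym z x).
  destruct (inner x y), (inner x z). Cring.
Qed.

Lemma inner_scal_r (a : C) (x y : H) : inner x (hscal a y) = Cmul (Cconj a) (inner x y).
Proof.
  rewrite inner_conj_sym, inner_scal_l, (inner_conj_sym y x).
  destruct (inner x y), a. Cring.
Qed.

Lemma inner_sub_l (x y z : H) : inner (hsub x y) z = Csub (inner x z) (inner y z).
Proof.
  unfold hsub. rewrite inner_add_l, hopp_scal, inner_scal_l. destruct (inner x z), (inner y z).
  Cring.
Qed.

Lemma inner_sub_r (x y z : H) : inner x (hsub y z) = Csub (inner x y) (inner x z).
Proof.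
  unfold hsub. rewrite inner_add_r, hopp_scal, inner_scal_r. destruct (inner x y), (inner x z).
  Cring.
Qed.

Definition n2 (x : H) : R := fst (inner x x).

Lemma inner_self (x : H) : inner x x = (n2 x, 0).
Proof.
  pose proof (inner_conj_sym x x) as E. unfold n2. destruct (inner x x) as [a b].
  unfold Cconj in E; simpl. injection E; intros. f_equal. lra.
Qed.

Lemma n2_nonneg (x : H) : 0 <= n2 x.
Proof. apply inner_pos. Qed.

Lemma re_inner_sym (x y : H) : fst (inner y x) = fst (inner x y).
Proof. rewrite inner_conj_sym. reflexivity. Qed.

Lemma n2_add (x y : H) : n2 (hadd x y) = n2 x + n2 y + 2 * fst (inner x y).
Proof.
  unfold n2. rewrite inner_add_l, !inner_add_r. unfold Cadd; simpl.
  rewrite (re_inner_sym x y). ring.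
Qed.

Lemma n2_sub (x y : H) : n2 (hsub x y) = n2 x + n2 y - 2 * fst (inner x y).
Proof.
  unfold n2. rewrite inner_sub_l, !inner_sub_r. unfold Csub; simpl.
  rewrite (re_inner_sym x y). ring.
Qed.

Lemma n2_scal (a : C) (x : H) : n2 (hscal a x) = (fst a * fst a + snd a * snd a) * n2 x.
Proof.
  unfold n2 at 1. rewrite inner_scal_l, inner_scal_r, inner_self.
  destruct a; unfold Cmul, Cconj; simpl. ring.
Qed.

Lemma re_inner_sq_le (x y : H) : fst (inner x y) * fst (inner x y) <= n2 x * n2 y.
Proof.
  set (r := fst (inner x y)).
  destruct (Req_dec (n2 y) 0) as [Z|NZ].
  - apply inner_definite in Z. subst r. rewrite Z, inner_zero_r. simpl.
    pose proof (n2_nonneg x). pose proof (n2_nonneg hzero). nra.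
  - (* expand [0 <= |x - t y|^2] with [t = Re <x, y> / |y|^2] *)
    set (t := r / n2 y).
    assert (Ht : t * n2 y = r) by (unfold t; field; exact NZ).
    pose proof (n2_nonneg (hsub x (hscal (t, 0) y))) as Q.
    rewrite n2_sub, n2_scal, inner_scal_r in Q. unfold Cmul, Cconj in Q; simpl in Q.
    fold r in Q. pose proof (n2_nonneg y). nra.
Qed.

Lemma im_inner_sq_le (x y : H) : snd (inner x y) * snd (inner x y) <= n2 x * n2 y.
Proof.
  replace (snd (inner x y)) with (fst (inner x (hscal (0, 1) y)))
    by (rewrite inner_scal_r; unfold Cmul, Cconj; simpl; ring).
  replace (n2 y) with (n2 (hscal (0, 1) y)) by (rewrite n2_scal; simpl; ring).
  apply re_inner_sq_le.
Qed.

Lemma hnorm_nonneg (x : H) : 0 <= hnorm x.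
Proof. apply sqrt_pos. Qed.

Lemma hnorm_sq (x : H) : hnorm x * hnorm x = n2 x.
Proof. apply sqrt_sqrt, n2_nonneg. Qed.

Lemma Cabs1_inner_le (x y : H) : Cabs1 (inner x y) <= 2 * (hnorm x * hnorm y).
Proof.
  assert (Hb : forall a, a * a <= n2 x * n2 y -> Rabs a <= hnorm x * hnorm y).
  { intros a Ha. rewrite <- (Rabs_pos_eq (hnorm x * hnorm y))
      by (apply Rmult_le_pos; apply hnorm_nonneg).
    apply Rsqr_le_abs_0. unfold Rsqr. rewrite <- hnorm_sq, <- (hnorm_sq y) in Ha. nra. }
  unfold Cabs1.
  pose proof (Hb _ (re_inner_sq_le x y)); pose proof (Hb _ (im_inner_sq_le x y)). lra.
Qed.

Lemma hnorm_sub_sym (a b : H) : hnorm (hsub a b) = hnorm (hsub b a).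
Proof.
  unfold hnorm. fold (n2 (hsub a b)) (n2 (hsub b a)).
  rewrite !n2_sub, (re_inner_sym a b). f_equal; ring.
Qed.

Lemma inner_limit_l (u : nat -> H) (l w : H) (c : C) (N0 : nat) :
  hcv u l -> (forall n, (n >= N0)%nat -> inner (u n) w = c) -> inner l w = c.
Proof.
  intros Cv Ev.
  enough (E : Csub (inner l w) c = C0).
  { destruct (inner l w), c. unfold Csub, C0 in E. injection E; intros. apply Ceq; simpl; lra. }
  apply Cabs1_eq0. intros eps ep.
  pose proof (hnorm_nonneg w).
  destruct (Cv (eps / (2 * (hnorm w + 1)))) as [N HN]; [apply Rdiv_lt_0_compat; lra|].
  set (n := Nat.max N N0).
  specialize (HN n (Nat.le_max_l _ _)). rewrite <- (Ev n (Nat.le_max_r _ _)).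
  rewrite <- inner_sub_l, hnorm_sub_sym in *.
  eapply Rle_lt_trans; [apply Cabs1_inner_le|].
  pose proof (hnorm_nonneg (hsub l (u n))).
  assert (hnorm (hsub l (u n)) * (2 * (hnorm w + 1)) < eps).
  { apply (Rmult_lt_compat_r (2 * (hnorm w + 1))) in HN; [|lra].
    unfold Rdiv in HN. rewrite Rmult_assoc, Rinv_l in HN by lra. lra. }
  nra.
Qed.

End Algebra.

(** * Finite sums and Bessel's inequality *)

Fixpoint Rsum (f : nat -> R) (n : nat) : R :=
  match n with 0 => 0 | S m => Rsum f m + f m end.

Lemma Rsum_le (f g : nat -> R) n : (forall i, (i < n)%nat -> f i <= g i) -> Rsum f n <= Rsum g n.
Proof.
  induction n as [|n IH]; simpl; intros Hfg; [lra|].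
  pose proof (Hfg n (Nat.lt_succ_diag_r n)).
  assert (Rsum f n <= Rsum g n) by (apply IH; intros; apply Hfg; lia). lra.
Qed.

Lemma Rsum_const n (c : R) : Rsum (fun _ => c) n = INR n * c.
Proof. induction n as [|n IH]; [simpl; ring|]. rewrite S_INR; simpl; rewrite IH; ring. Qed.

Lemma Rsum_swap (f : nat -> nat -> R) n K :
  Rsum (fun k => Rsum (fun i => f k i) n) K = Rsum (fun i => Rsum (fun k => f k i) K) n.
Proof.
  induction K as [|K IH]; simpl.
  - induction n; simpl; lra.
  - rewrite IH. clear IH. induction n; simpl; [ring|]. rewrite <- IHn. ring.
Qed.

Lemma Rsum_bounded_cauchy (s : nat -> R) (B : R) :
  (forall k, 0 <= s k) -> (forall K, Rsum s K <= B) ->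
  forall eps, eps > 0 -> exists N, forall n m, (N <= n <= m)%nat -> Rsum s m - Rsum s n < eps.
Proof.
  intros Hs HB.
  assert (Gr : Un_growing (Rsum s)) by (intro n; simpl; pose proof (Hs n); lra).
  assert (Ub : has_ub (Rsum s)) by (exists B; intros r [i ->]; apply HB).
  intros eps ep. destruct (CV_Cauchy _ (growing_cv _ Gr Ub) eps ep) as [N HN].
  exists N. intros n m Hnm. specialize (HN m n ltac:(lia) ltac:(lia)).
  unfold R_dist in HN. apply Rabs_def2 in HN. lra.
Qed.

Lemma Rsum_bounded_terms_vanish (s : nat -> R) (B : R) :
  (forall k, 0 <= s k) -> (forall K, Rsum s K <= B) ->
  forall eps, eps > 0 -> exists N, forall k, (k >= N)%nat -> s k < eps.
Proof.
  intros Hs HB eps ep. destruct (Rsum_bounded_cauchy s B Hs HB eps ep) as [N HN].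
  exists N. intros k Hk. specialize (HN k (S k) ltac:(lia)). simpl in HN. lra.
Qed.

Section PartialProjection.
Context {H : CHilbert}.

Fixpoint hsum (f : nat -> H) (n : nat) : H :=
  match n with 0 => hzero | S m => hadd (hsum f m) (f m) end.

Definition orthonormal_on (u : nat -> H) (P : nat -> bool) : Prop :=
  forall i j, P i = true -> P j = true -> inner (u i) (u j) = if Nat.eqb i j then C1 else C0.

Definition cn2 (c : C) : R := fst c * fst c + snd c * snd c.

Definition partial_proj (u : nat -> H) (P : nat -> bool) (v : H) (n : nat) : H :=
  hsum (fun i => if P i then hscal (inner v (u i)) (u i) else hzero) n.

Definition bessel_sum (u : nat -> H) (P : nat -> bool) (v : H) (n : nat) : R :=
  Rsum (fun i => if P i then cn2 (inner v (u i)) else 0) n.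

Variables (u : nat -> H) (P : nat -> bool).
Hypothesis Hu : orthonormal_on u P.

Lemma n2_orthonormal i : P i = true -> n2 (u i) = 1.
Proof. intro Pi. unfold n2. rewrite (Hu i i Pi Pi), Nat.eqb_refl. reflexivity. Qed.

Lemma partial_proj_S v n : partial_proj u P v (S n) =
  hadd (partial_proj u P v n) (if P n then hscal (inner v (u n)) (u n) else hzero).
Proof. reflexivity. Qed.

Lemma partial_proj_inner v n j : P j = true ->
  inner (partial_proj u P v n) (u j) = if Nat.ltb j n then inner v (u j) else C0.
Proof.
  intros Pj. induction n as [|n IH]; [apply inner_zero_l|].
  rewrite partial_proj_S, inner_add_l, IH. destruct (P n) eqn:Pn.
  - rewrite inner_scal_l, (Hu n j Pn Pj).
    destruct (Nat.eqb_spec n j), (Nat.ltb_spec j n), (Nat.ltb_spec j (S n)); try lia;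
      try subst; Cring.
  - rewrite inner_zero_l.
    destruct (Nat.ltb_spec j n), (Nat.ltb_spec j (S n)); try lia; try Cring.
    replace j with n in Pj by lia. congruence.
Qed.

Lemma inner_partial_proj_eq0 v n w :
  (forall j, P j = true -> (j < n)%nat -> inner w (u j) = C0) ->
  inner w (partial_proj u P v n) = C0.
Proof.
  intros Hw. induction n as [|n IH]; [apply inner_zero_r|].
  rewrite partial_proj_S, inner_add_r, IH by (intros; apply Hw; auto; lia).
  destruct (P n) eqn:Pn.
  - rewrite inner_scal_r, Hw by auto. Cring.
  - rewrite inner_zero_r. Cring.
Qed.

Lemma partial_proj_residual v n j : P j = true -> (j < n)%nat ->
  inner (hsub v (partial_proj u P v n)) (u j) = C0.
Proof.
  intros Pj L. rewrite inner_sub_l, partial_proj_inner by auto.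
  destruct (Nat.ltb_spec j n); [Cring | lia].
Qed.

Lemma n2_partial_proj v n : n2 (partial_proj u P v n) = bessel_sum u P v n.
Proof.
  induction n as [|n IH]; [unfold n2, partial_proj; simpl; rewrite inner_zero_l; reflexivity|].
  rewrite partial_proj_S. unfold bessel_sum in *; simpl. destruct (P n) eqn:Pn.
  - rewrite n2_add, n2_scal, inner_scal_r, IH, partial_proj_inner by auto.
    rewrite (n2_orthonormal n Pn). destruct (Nat.ltb_spec n n); [lia|].
    unfold cn2, Cmul, Cconj, C0; simpl. ring.
  - rewrite hadd_zero, IH. ring.
Qed.

Lemma pythagoras_partial_proj v n :
  n2 v = n2 (hsub v (partial_proj u P v n)) + bessel_sum u P v n.
Proof.
  rewrite <- n2_partial_proj.
  rewrite <- (hsub_add_cancel v (partial_proj u P v n)) at 1. rewrite n2_add.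
  rewrite inner_partial_proj_eq0; [simpl; ring|].
  intros; apply partial_proj_residual; auto.
Qed.

Lemma bessel_inequality v n : bessel_sum u P v n <= n2 v.
Proof.
  rewrite (pythagoras_partial_proj v n).
  pose proof (n2_nonneg (hsub v (partial_proj u P v n))). lra.
Qed.

End PartialProjection.

(** * Closed spans and orthogonal projections *)

Section ClosedSpan.
Context {H : CHilbert}.

(* The closed span of [{u m | P m}], realised as its double orthogonal complement. *)
Definition cspan (u : nat -> H) (P : nat -> bool) (z : H) : Prop :=
  forall w, (forall m, P m = true -> inner (u m) w = C0) -> inner z w = C0.

Lemma cspan_closed u P : closed_subspace (cspan u P).
Proof.
  split; [|split; [|split]].
  - intros w _. apply inner_zero_l.
  - intros x y Hx Hy w Hw. rewrite inner_add_l, Hx, Hy by auto. Cring.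
  - intros a x Hx w Hw. rewrite inner_scal_l, Hx by auto. Cring.
  - intros v l Hv Cv w Hw. apply (inner_limit_l v l w C0 0); auto. intros n _. apply Hv, Hw.
Qed.

Lemma cspan_gen u P m : P m = true -> cspan u P (u m).
Proof. intros Pm w Hw. apply Hw, Pm. Qed.

Lemma cspan_partial_proj u P v n : cspan u P (partial_proj u P v n).
Proof.
  destruct (cspan_closed u P) as [Z [A [S _]]].
  induction n as [|n IH]; [apply Z|].
  rewrite partial_proj_S. apply A; auto.
  destruct (P n) eqn:Pn; auto. apply S, cspan_gen, Pn.
Qed.

Lemma cspan_orthogonal u P Q :
  (forall i j, P i = true -> Q j = true -> inner (u i) (u j) = C0) ->
  forall x y, cspan u P x -> cspan u Q y -> inner x y = C0.
Proof.
  intros O x y Hx Hy. apply Hx. intros m Pm.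
  apply inner_eq0_sym, Hy. intros j Qj. apply inner_eq0_sym, O; auto.
Qed.

Lemma orth_proj_inner (S : H -> Prop) (v y x : H) :
  is_orth_proj S v y -> S x -> inner y x = inner v x.
Proof.
  intros [_ Orth] Sx. specialize (Orth x Sx). rewrite inner_sub_l in Orth.
  destruct (inner v x), (inner y x). unfold Csub, C0 in Orth. injection Orth; intros.
  apply Ceq; simpl; lra.
Qed.

Variables (u : nat -> H) (P : nat -> bool).
Hypothesis Hu : orthonormal_on u P.

Lemma n2_partial_proj_sub v M M' : (M <= M')%nat ->
  n2 (hsub (partial_proj u P v M') (partial_proj u P v M))
  = bessel_sum u P v M' - bessel_sum u P v M.
Proof.
  intros L. set (w := hsub (partial_proj u P v M') (partial_proj u P v M)).
  assert (Hw : inner w (partial_proj u P v M) = C0).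
  { apply inner_partial_proj_eq0. intros j Pj Lj.
    unfold w. rewrite inner_sub_l, !(partial_proj_inner u P Hu) by auto.
    destruct (Nat.ltb_spec j M'), (Nat.ltb_spec j M); try lia. Cring. }
  rewrite <- !(n2_partial_proj u P Hu).
  rewrite <- (hsub_add_cancel (partial_proj u P v M') (partial_proj u P v M)).
  fold w. rewrite n2_add, Hw. simpl. ring.
Qed.

Lemma partial_proj_cauchy v eps : eps > 0 -> exists N, forall n m, (N <= n <= m)%nat ->
  hnorm (hsub (partial_proj u P v m) (partial_proj u P v n)) < eps.
Proof.
  intros ep.
  destruct (Rsum_bounded_cauchy (fun i => if P i then cn2 (inner v (u i)) else 0) (n2 v))
    with (eps := eps * eps) as [N HN].
  - intro i; destruct (P i); [unfold cn2; nra | lra].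
  - intro K. apply (bessel_inequality u P Hu).
  - nra.
  - exists N. intros n m Hnm. specialize (HN n m Hnm).
    unfold hnorm. rewrite <- (sqrt_Rsqr eps) by lra. apply sqrt_lt_1_alt.
    split; [apply n2_nonneg|]. fold (n2 (hsub (partial_proj u P v m) (partial_proj u P v n))).
    rewrite n2_partial_proj_sub by lia. unfold bessel_sum, Rsqr. lra.
Qed.

Lemma orth_proj_cspan_exists (v : H) : exists y, is_orth_proj (cspan u P) v y.
Proof.
  set (s := partial_proj u P v).
  destruct (hcomplete H s) as [y Hy].
  { intros eps ep. destruct (partial_proj_cauchy v eps ep) as [N HN].
    exists N. intros n m Hn Hm. change (hnorm (hsub (s n) (s m)) < eps).
    destruct (Nat.le_ge_cases n m); [rewrite hnorm_sub_sym|]; apply HN; lia. }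
  exists y. split.
  - destruct (cspan_closed u P) as [_ [_ [_ Cl]]]. apply (Cl s y); [|exact Hy].
    intro n. apply cspan_partial_proj.
  - intros z Hz. apply inner_eq0_sym, Hz. intros m Pm. apply inner_eq0_sym.
    rewrite inner_sub_l, (inner_limit_l s y (u m) (inner v (u m)) (S m) Hy); [Cring|].
    intros n Hn. unfold s. rewrite (partial_proj_inner u P Hu) by auto.
    destruct (Nat.ltb_spec m n); [reflexivity | lia].
Qed.

End ClosedSpan.

(** * Avoiding a finite orthonormal family *)

Lemma unit_orthogonal_near {H : CHilbert} (u : nat -> H) (P : nat -> bool) (x : H) (n : nat) :
  orthonormal_on u P -> n2 x = 1 -> bessel_sum u P x n < 1 ->
  exists e, inner e e = C1 /\ (forall i, P i = true -> (i < n)%nat -> inner e (u i) = C0) /\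
    n2 (hsub e x) <= 2 * bessel_sum u P x n.
Proof.
  intros Hu Nx Hb.
  set (p := partial_proj u P x n). set (d2 := bessel_sum u P x n). set (x' := hsub x p).
  assert (Np : n2 p = d2) by apply (n2_partial_proj u P Hu).
  assert (Nx' : n2 x' = 1 - d2).
  { pose proof (pythagoras_partial_proj u P Hu x n) as E. fold p d2 in E. fold x' in E. lra. }
  set (s := hnorm x').
  assert (Hs : s * s = 1 - d2) by (unfold s; rewrite hnorm_sq; exact Nx').
  assert (s_pos : 0 < s).
  { unfold s, hnorm. apply sqrt_lt_R0. fold (n2 x'). change (d2 < 1) in Hb. lra. }
  assert (d2_nonneg : 0 <= d2) by (rewrite <- Np; apply n2_nonneg).
  (* [Re <x', x> = |x'|^2] because [x' = x - p] is orthogonal to [p] *)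
  assert (Re : fst (inner x' x) = s * s).
  { unfold x'. rewrite inner_sub_l. simpl. fold (n2 x). rewrite re_inner_sym.
    pose proof (n2_sub x p) as E. fold x' in E. lra. }
  exists (hscal (/ s, 0) x'). split; [|split].
  - rewrite inner_self, n2_scal, Nx', <- Hs. unfold C1; f_equal; simpl. field. lra.
  - intros i Pi Li. rewrite inner_scal_l. unfold x', p.
    rewrite (partial_proj_residual u P Hu) by auto. Cring.
  - rewrite n2_sub, n2_scal, Nx', Nx, inner_scal_l. simpl. rewrite Re, <- Hs.
    (* [|e - x|^2 = 2 - 2 s], and [1 - s <= 1 - s^2 = d2] as [s <= 1] *)
    assert (Inv : / s * s = 1) by (field; lra). nra.
Qed.

Section BoundedOperator.
Context {H : CHilbert}.
Variable T : H -> H.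
Hypothesis Tlin : bounded_operator T.

Lemma bounded_operator_sub x y : T (hsub x y) = hsub (T x) (T y).
Proof. destruct Tlin as [A [S _]]. unfold hsub. rewrite A, !hopp_scal, S. reflexivity. Qed.

Lemma bounded_operator_bound : exists M, M > 0 /\ forall x, hnorm (T x) <= M * hnorm x.
Proof.
  destruct Tlin as [_ [_ [M HM]]]. exists (Rabs M + 1). split; [pose proof (Rabs_pos M); lra|].
  intro x. pose proof (HM x). pose proof (hnorm_nonneg x). pose proof (Rle_abs M). nra.
Qed.

Lemma quadratic_form_lipschitz (M : R) (x y : H) :
  (forall z, hnorm (T z) <= M * hnorm z) ->
  Cabs1 (Csub (inner (T y) y) (inner (T x) x)) <= 2 * M * hnorm (hsub y x) * (hnorm x + hnorm y).
Proof.
  intros HM.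
  replace (Csub (inner (T y) y) (inner (T x) x))
    with (Cadd (inner (T (hsub y x)) y) (inner (T x) (hsub y x))).
  2:{ rewrite bounded_operator_sub, inner_sub_l, inner_sub_r.
      destruct (inner (T y) y), (inner (T x) y), (inner (T x) x). Cring. }
  eapply Rle_trans; [apply Cabs1_add|].
  pose proof (Cabs1_inner_le (T (hsub y x)) y). pose proof (Cabs1_inner_le (T x) (hsub y x)).
  pose proof (HM (hsub y x)). pose proof (HM x).
  pose proof (hnorm_nonneg x). pose proof (hnorm_nonneg y). pose proof (hnorm_nonneg (hsub y x)).
  pose proof (hnorm_nonneg (T x)). pose proof (hnorm_nonneg (T (hsub y x))).
  nra.
Qed.

End BoundedOperator.

Lemma bessel_sum_vanishes {H : CHilbert} (u : nat -> H) (P : nat -> bool) (n : nat)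
  (xs : nat -> H) :
  orthonormal_on u P -> orthonormal_seq xs ->
  forall eps, eps > 0 -> exists N, forall k, (k >= N)%nat -> bessel_sum u P (xs k) n < eps.
Proof.
  intros Hu Hxs. apply Rsum_bounded_terms_vanish with (B := INR n).
  - intro k. rewrite <- (n2_partial_proj u P Hu). apply n2_nonneg.
  - (* swap the sums and apply Bessel's inequality to each [u i] against [xs] *)
    intro K. unfold bessel_sum.
    rewrite (Rsum_swap (fun k i => if P i then cn2 (inner (xs k) (u i)) else 0)).
    rewrite <- (Rmult_1_r (INR n)), <- Rsum_const. apply Rsum_le. intros i _.
    destruct (P i) eqn:Pi.
    + rewrite <- (n2_orthonormal u P Hu i Pi).
      eapply Rle_trans; [|apply (bessel_inequality xs (fun _ => true))].
      * apply Rsum_le. intros k _. rewrite (inner_conj_sym (u i) (xs k)).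
        unfold cn2, Cconj; simpl. lra.
      * intros a b _ _. apply Hxs.
    + rewrite Rsum_const. lra.
Qed.

Lemma ess_num_range_orthogonal_to_finite {H : CHilbert} (T : H -> H) (lam : C)
  (u : nat -> H) (n : nat) (eps : R) :
  bounded_operator T -> ess_num_range T lam -> orthonormal_on u (fun i => Nat.ltb i n) ->
  eps > 0 ->
  exists x, inner x x = C1 /\ (forall i, (i < n)%nat -> inner x (u i) = C0) /\
    Cabs1 (Csub (inner (T x) x) lam) < eps.
Proof.
  intros Tlin [xs [Hxs Cv]] Hu ep.
  destruct (bounded_operator_bound T Tlin) as [M [Mp HM]].
  set (d := Rmin (1/2) (eps / (16 * M))).
  assert (d_pos : 0 < d) by (apply Rmin_pos; [lra | apply Rdiv_lt_0_compat; lra]).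
  assert (d_le : d <= 1/2) by apply Rmin_l.
  assert (Md : 16 * M * d <= eps).
  { pose proof (Rmin_r (1/2) (eps / (16 * M))) as E. fold d in E.
    apply (Rmult_le_compat_l (16 * M)) in E; [|lra].
    replace (16 * M * (eps / (16 * M))) with eps in E by (field; lra). lra. }
  destruct (bessel_sum_vanishes u _ n xs Hu Hxs (d * d)) as [N1 HN1]; [nra|].
  destruct (Cv (eps / 4)) as [N2 HN2]; [lra|].
  set (k := Nat.max N1 N2).
  specialize (HN1 k (Nat.le_max_l _ _)). specialize (HN2 k (Nat.le_max_r _ _)).
  assert (Nk : n2 (xs k) = 1) by (unfold n2; rewrite (Hxs k k), Nat.eqb_refl; reflexivity).
  destruct (unit_orthogonal_near u _ (xs k) n Hu Nk) as [x [Ux [Ox Dx]]]; [nra|].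
  exists x. split; [exact Ux | split].
  - intros i Li. apply Ox; [apply Nat.ltb_lt|]; exact Li.
  - assert (Nx : hnorm x = 1) by (unfold hnorm; rewrite Ux; apply sqrt_1).
    assert (Nxk : hnorm (xs k) = 1) by (unfold hnorm; fold (n2 (xs k)); rewrite Nk; apply sqrt_1).
    assert (Dxk : hnorm (hsub x (xs k)) <= 2 * d).
    { pose proof (hnorm_sq (hsub x (xs k))). pose proof (hnorm_nonneg (hsub x (xs k))). nra. }
    pose proof (quadratic_form_lipschitz T Tlin M (xs k) x HM) as L.
    pose proof (Cabs1_le_Cmod (Csub (inner (T (xs k)) (xs k)) lam)).
    pose proof (Cabs1_sub_triangle (inner (T x) x) lam (inner (T (xs k)) (xs k))).
    rewrite Nx, Nxk in L. nra.
Qed.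

(** * Orthonormal sequences by successive extension *)

Section Extension.
Context {H : CHilbert}.
Variable Q : nat -> H -> Prop.

Definition extends (u : nat -> H) (n : nat) (x : H) : Prop :=
  inner x x = C1 /\ (forall i, (i < n)%nat -> inner x (u i) = C0) /\ Q n x.

Hypothesis extendable : forall (u : nat -> H) (n : nat),
  orthonormal_on u (fun i => Nat.ltb i n) -> exists x, extends u n x.

Let next (u : nat -> H) (n : nat) : H := epsilon (inhabits hzero) (extends u n).

(* [extension_prefix n] holds the first [n] vectors of the sequence; later entries are junk. *)
Fixpoint extension_prefix (n : nat) : nat -> H :=
  match n with
  | 0 => fun _ => hzero
  | S m => fun i => if Nat.eqb i m then next (extension_prefix m) m else extension_prefix m i
  end.

Let chosen (n : nat) : H := next (extension_prefix n) n.

Lemma extension_prefix_chosen n i : (i < n)%nat -> extension_prefix n i = chosen i.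
Proof.
  induction n as [|n IH]; intros L; [lia|]. simpl.
  destruct (Nat.eqb_spec i n); [subst; reflexivity | apply IH; lia].
Qed.

Lemma chosen_extends n :
  orthonormal_on chosen (fun i => Nat.ltb i n) -> extends (extension_prefix n) n (chosen n).
Proof.
  intros O. apply epsilon_spec, extendable. intros i j Hi Hj.
  pose proof Hi as Li; pose proof Hj as Lj. apply Nat.ltb_lt in Li, Lj.
  rewrite !extension_prefix_chosen by assumption. apply O; assumption.
Qed.

Lemma chosen_orthonormal_upto n : orthonormal_on chosen (fun i => Nat.ltb i n).
Proof.
  induction n as [|n IH]; [intros i j Hi; discriminate Hi|].
  destruct (chosen_extends n IH) as [U [O _]].
  intros i j Hi Hj. apply Nat.ltb_lt in Hi, Hj.
  destruct (Nat.eq_dec i n), (Nat.eq_dec j n); subst.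
  - rewrite Nat.eqb_refl. exact U.
  - destruct (Nat.eqb_spec n j); [lia|].
    rewrite <- (extension_prefix_chosen n j) by lia. apply O; lia.
  - destruct (Nat.eqb_spec i n); [lia|]. apply inner_eq0_sym.
    rewrite <- (extension_prefix_chosen n i) by lia. apply O; lia.
  - apply IH; apply Nat.ltb_lt; lia.
Qed.

Theorem orthonormal_seq_by_extension :
  exists e : nat -> H, orthonormal_seq e /\ forall n, Q n (e n).
Proof.
  exists chosen. split.
  - intros i j. apply (chosen_orthonormal_upto (S (Nat.max i j))); apply Nat.ltb_lt; lia.
  - intro n. apply (chosen_extends n (chosen_orthonormal_upto n)).
Qed.

End Extension.

(** * A countable dense subset of the closed unit disc *)

Lemma floor_nat (r : R) : 0 <= r -> exists p : nat, INR p <= r < INR p + 1.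
Proof.
  intros rp. destruct (archimed r) as [A B].
  assert (z1 : (1 <= up r)%Z) by (assert (0 < up r)%Z by (apply lt_0_IZR; lra); lia).
  exists (Z.to_nat (up r - 1)).
  rewrite INR_IZR_INZ, Z2Nat.id by lia. rewrite minus_IZR. simpl. lra.
Qed.

(* Rounding towards zero, so that grid approximations of points of the disc stay in the disc. *)
Lemma nat_diff_approx (x N : R) : N > 0 -> exists p q : nat,
  Rabs ((INR p - INR q) / N) <= Rabs x /\ Rabs ((INR p - INR q) / N - x) <= 1 / N.
Proof.
  intros Np.
  destruct (floor_nat (Rabs x * N)) as [p [P1 P2]]; [pose proof (Rabs_pos x); nra|].
  set (t := INR p / N).
  assert (Ep : INR p = t * N) by (unfold t; field; lra).
  assert (HN : N * (1 / N) = 1) by (field; lra).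
  assert (Ht : 0 <= t <= Rabs x) by (pose proof (pos_INR p); nra).
  assert (Hd : Rabs x - t <= 1 / N).
  { apply (Rmult_le_reg_r N); [exact Np|]. rewrite Rmult_comm in HN. rewrite HN. nra. }
  destruct (Rle_or_lt 0 x) as [xp | xn].
  - rewrite Rabs_pos_eq in Ht, Hd by lra.
    exists p, 0%nat. simpl. rewrite Rminus_0_r. fold t.
    rewrite (Rabs_pos_eq t), (Rabs_pos_eq x), (Rabs_left1 (t - x)) by lra. split; lra.
  - rewrite Rabs_left in Ht, Hd by lra.
    exists 0%nat, p. simpl. replace ((0 - INR p) / N) with (- t) by (unfold t; field; lra).
    rewrite Rabs_Ropp, (Rabs_pos_eq t), (Rabs_left x), (Rabs_pos_eq (- t - x)) by lra.
    split; lra.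
Qed.

(* Integer coordinates are written as differences of naturals, so that [c] ranges over all grid
   points of mesh [1 / (j + 1)] in the disc. *)
Definition disc_grid (j c : nat) : C :=
  let '(a, b) := of_nat c in
  let '(p1, q1) := of_nat a in
  let '(p2, q2) := of_nat b in
  let z := ((INR p1 - INR q1) / (INR j + 1), (INR p2 - INR q2) / (INR j + 1)) in
  if Rle_dec (Cmod z) 1 then z else C0.

Lemma disc_grid_in_disc j c : in_closed_disc (disc_grid j c).
Proof.
  unfold disc_grid. destruct (of_nat c) as [a b]. destruct (of_nat a), (of_nat b).
  destruct Rle_dec as [In|_]; [exact In|].
  unfold in_closed_disc, Cmod, C0; simpl. rewrite Rmult_0_l, Rplus_0_l, sqrt_0. lra.
Qed.

Lemma disc_grid_dense (lam : C) (j : nat) : in_closed_disc lam ->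
  exists c, Cabs1 (Csub (disc_grid j c) lam) <= 2 / (INR j + 1).
Proof.
  intros D. assert (Np : INR j + 1 > 0) by (pose proof (pos_INR j); lra).
  destruct (nat_diff_approx (fst lam) _ Np) as [p1 [q1 [A1 B1]]].
  destruct (nat_diff_approx (snd lam) _ Np) as [p2 [q2 [A2 B2]]].
  exists (to_nat (to_nat (p1, q1), to_nat (p2, q2))).
  unfold disc_grid. rewrite !cancel_of_to.
  destruct Rle_dec as [_|Out].
  - unfold Cabs1, Csub; simpl. unfold Rdiv in *. lra.
  - exfalso. apply Out. unfold in_closed_disc, Cmod in *; simpl.
    eapply Rle_trans; [|exact D]. apply sqrt_le_1_alt.
    pose proof (Rsqr_le_abs_1 _ _ A1); pose proof (Rsqr_le_abs_1 _ _ A2). unfold Rsqr in *. lra.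
Qed.

Definition index_code (k j c : nat) : nat := to_nat (k, to_nat (j, c)).
Definition index_block (n : nat) : nat := fst (of_nat n).
Definition index_level (n : nat) : nat := fst (of_nat (snd (of_nat n))).
Definition index_target (n : nat) : C := disc_grid (index_level n) (snd (of_nat (snd (of_nat n)))).

Lemma index_block_code k j c : index_block (index_code k j c) = k.
Proof. unfold index_block, index_code. rewrite cancel_of_to. reflexivity. Qed.

Lemma index_level_code k j c : index_level (index_code k j c) = j.
Proof.
  unfold index_level, index_code. rewrite cancel_of_to. cbn [fst snd].
  rewrite cancel_of_to. reflexivity.
Qed.

Lemma index_target_code k j c : index_target (index_code k j c) = disc_grid j c.
Proof.
  unfold index_target. rewrite index_level_code. unfold index_code.
  rewrite cancel_of_to. cbn [fst snd]. rewrite cancel_of_to. reflexivity.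
Qed.

(** * The subspaces [H_k] *)

Lemma orthonormal_seq_comp {H : CHilbert} (e : nat -> H) (f : nat -> nat) :
  orthonormal_seq e -> (forall i j, f i = f j -> i = j) -> orthonormal_seq (fun j => e (f j)).
Proof.
  intros He Hf i j. rewrite He.
  destruct (Nat.eqb_spec (f i) (f j)) as [E|NE], (Nat.eqb_spec i j); auto.
  - apply Hf in E. contradiction.
  - subst. contradiction.
Qed.

Lemma ess_num_range_compression_of_seq {H : CHilbert} (S : H -> Prop) (T : H -> H)
  (x : nat -> H) (lam : C) :
  (forall v, exists y, is_orth_proj S v y) -> (forall k, S (x k)) -> orthonormal_seq x ->
  Ccv (fun k => inner (T (x k)) (x k)) lam -> ess_num_range_compression S T lam.
Proof.
  intros Hproj Sx Ox Cv.
  destruct (choice (fun k y => is_orth_proj S (T (x k)) y) (fun k => Hproj (T (x k))))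
    as [y Hy].
  exists x. split; [exact Sx | split; [exact Ox |]].
  exists y. split; [exact Hy |].
  intros eps ep. destruct (Cv eps ep) as [N HN]. exists N. intros k Hk.
  rewrite (orth_proj_inner S _ _ _ (Hy k) (Sx k)). apply HN, Hk.
Qed.

Section Blocks.
Context {H : CHilbert}.
Variable T : H -> H.

Definition tracks_target (n : nat) (x : H) : Prop :=
  Cabs1 (Csub (inner (T x) x) (index_target n)) < / (INR (index_level n) + 1).

Lemma tracking_orthonormal_seq_exists :
  bounded_operator T -> (forall lam, in_closed_disc lam -> ess_num_range T lam) ->
  exists e : nat -> H, orthonormal_seq e /\ forall n, tracks_target n (e n).
Proof.
  intros Tlin Hyp. apply orthonormal_seq_by_extension. intros u n Hu.
  apply (ess_num_range_orthogonal_to_finite T _ u n); [exact Tlin | | exact Hu |].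
  - apply Hyp, disc_grid_in_disc.
  - apply Rinv_0_lt_compat. pose proof (pos_INR (index_level n)). lra.
Qed.

Variable e : nat -> H.
Hypothesis He : orthonormal_seq e.

Definition block_span (k : nat) : H -> Prop := cspan e (fun m => Nat.eqb (index_block m) k).

Lemma block_span_orthogonal k j : k <> j ->
  forall x y, block_span k x -> block_span j y -> inner x y = C0.
Proof.
  intros Nkj. apply cspan_orthogonal. intros i i' Pi Pi'.
  apply Nat.eqb_eq in Pi, Pi'. rewrite He.
  destruct (Nat.eqb_spec i i'); [subst; contradiction | reflexivity].
Qed.

Lemma block_span_compression_range k lam :
  (forall n, tracks_target n (e n)) -> in_closed_disc lam ->
  ess_num_range_compression (block_span k) T lam.
Proof.
  intros Htrack Hlam.
  destruct (choice (fun j c => Cabs1 (Csub (disc_grid j c) lam) <= 2 / (INR j + 1))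
    (fun j => disc_grid_dense lam j Hlam)) as [c Hc].
  set (x := fun j => e (index_code k j (c j))).
  apply (ess_num_range_compression_of_seq _ T x).
  - apply orth_proj_cspan_exists. intros i j _ _. apply He.
  - intro j. apply (cspan_gen e). rewrite index_block_code. apply Nat.eqb_refl.
  - apply (orthonormal_seq_comp e (fun j => index_code k j (c j))); [exact He |]. intros i j E.
    rewrite <- (index_level_code k i (c i)), E. apply index_level_code.
  - apply (Ccv_of_Cabs1_bound _ _ 3). intro j.
    pose proof (Htrack (index_code k j (c j))) as Hj.
    unfold tracks_target in Hj. rewrite index_level_code, index_target_code in Hj.
    pose proof (Cabs1_sub_triangle (inner (T (x j)) (x j)) lam (disc_grid j (c j))).
    pose proof (Hc j). unfold Rdiv in *. unfold x in *. lra.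
Qed.

End Blocks.

Theorem lemma6p1 (H : CHilbert) (T : H -> H) :
  bounded_operator T ->
  (forall lam, in_closed_disc lam -> ess_num_range T lam) ->
  exists Hk : nat -> H -> Prop,
    (forall k, closed_subspace (Hk k)) /\
    (forall k j, k <> j -> forall x y, Hk k x -> Hk j y -> inner x y = C0) /\
    (forall k lam, in_closed_disc lam -> ess_num_range_compression (Hk k) T lam).
Proof.
  intros Tlin Hyp.
  destruct (tracking_orthonormal_seq_exists T Tlin Hyp) as [e [He Htrack]].
  exists (block_span e). split; [|split].
  - intro k. apply cspan_closed.
  - exact (block_span_orthogonal e He).
  - intros k lam Hlam. exact (block_span_compression_range T e He k lam Htrack Hlam).
Qed.
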